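(* Let $(S,V)$ be a complete semiring-semimodule pair, let $S'\subseteq S$ contain $0$ and $1$, and let $\mathcal P=(n,\Gamma,I,M,P,p_0,l)$ be an $S'$-$\omega$-pushdown automaton. Set $x_0=I(M^* )_{p_0,\epsilon}P\in S$, $[i,p,j]=((M^* )_{p,\epsilon})_{i,j}\in S$, $z_0=I(M^{\omega,l})_{p_0}\in V$ and $[i,p]=((M^{\omega,l})_p)_i\in V$ for $p\in\Gamma$, $1\le i,j\le n$. Then these values satisfy the system $$x_0=\sum_{1\le m_1,m_2\le n}I_{m_1}[m_1,p_0,m_2]P_{m_2},$$ $$[i,p,j]=\sum_{k\ge0}\sum_{p_1,\dots,p_k\in\Gamma}\sum_{1\le m_1,\dots,m_k\le n}(M_{p,p_1\dots p_k})_{i,m_1}[m_1,p_1,m_2][m_2,p_2,m_3]\cdots[m_k,p_k,j]\quad(p\in\Gamma,\ 1\le i,j\le n),$$ $$z_0=\sum_{1\le m\le n}I_m[m,p_0],$$ $$[i,p]=\sum_{k\ge1}\sum_{p_1,\dots,p_k\in\Gamma}\sum_{1\le j\le k}\sum_{1\le m_1,\dots,m_j\le n}(M_{p,p_1\dots p_k})_{i,m_1}[m_1,p_1,m_2]\cdots[m_{j-1},p_{j-1},m_j][m_j,p_j]\quad(p\in\Gamma,\ 1\le i\le n)$$ (this solution is called the solution of order $l$), and $\|\mathcal P\|=(I(M^* )_{p_0,\epsilon}P,\ I(M^{\omega,l})_{p_0})$.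
   Context: A complete semiring-semimodule pair $(S,V)$ (in the sense of Ésik and Kuich, ''Modern Automata Theory'') consists of a complete starsemiring $S$ (arbitrary sums with infinite associativity/commutativity/distributivity laws, star $s^*=\sum_{j\ge0}s^j$) and a complete $S$-semimodule $V$, with infinite products $\prod_{j\ge1}s_j\in V$ of sequences in $S$ satisfying the axioms of that framework. In the second equation the term for $k=0$ is $(M_{p,\epsilon})_{i,j}$, and in general the last triple is $[m_k,p_k,j]$ (i.e. $m_{k+1}=j$). A pushdown transition matrix $M\in (S'^{n\times n})^{\Gamma^*\times\Gamma^*}$ ($\Gamma^*\times\Gamma^*$ matrix with $n\times n$ blocks over $S'$) satisfies (i) for each $p\in\Gamma$ only finitely many blocks $M_{p,\pi}$ are nonzero, and (ii) $M_{\pi_1,\pi_2}=M_{p,\pi}$ if $\pi_1=p\pi'$, $\pi_2=\pi\pi'$ for some $p\in\Gamma$, $\pi,\pi'\in\Gamma^*$, and $0$ otherwise. An $S'$-$\omega$-pushdown automaton $\mathcal P=(n,\Gamma,I,M,P,p_0,l)$ consists of $n\ge1$ (states $1,\dots,n$), an alphabet $\Gamma$, such an $M$, $I\in S'^{1\times n}$, $P\in S'^{n\times 1}$, $p_0\in\Gamma$ and $l\in\{0,\dots,n\}$. $M^*=\sum_{m\ge0}M^m$ with blocks $(M^* )_{\pi,\pi'}$; with $P_l=\{(j_1,j_2,\dots)\in\{1,\dots,n\}^\omega\mid j_t\le l\text{ for infinitely many }t\}$, $M^{\omega,l}\in (V^n)^{\Gamma^*}$ is given by $((M^{\omega,l})_\pi)_i=\sum_{\pi_1,\pi_2,\ldots\in\Gamma^*}\sum_{(j_1,j_2,\ldots)\in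 P_l}(M_{\pi,\pi_1})_{i,j_1}(M_{\pi_1,\pi_2})_{j_1,j_2}\cdots$. The behavior $\|\mathcal P\|=I(M^* )_{p_0,\epsilon}P+I(M^{\omega,l})_{p_0}$ is viewed as the pair $(I(M^* )_{p_0,\epsilon}P,I(M^{\omega,l})_{p_0})$ in the quemiring $S\times V$. *)

From HB Require Import structures.
From mathcomp Require Import all_boot all_order all_algebra.
Set Implicit Arguments. Unset Strict Implicit. Unset Printing Implicit Defensive.
Import GRing.Theory.
Local Open Scope ring_scope.

Record complete_pair (S : pzSemiRingType) (V : lSemiModType S) := CompletePair {
  csum : forall I : Type, (I -> S) -> S;
  vsum : forall I : Type, (I -> V) -> V;
  iprod : (nat -> S) -> V;
  csum_empty : forall I (f : I -> S), (I -> False) -> csum f = 0;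
  csum_single : forall I (f : I -> S) (i0 : I), (forall i, i = i0) -> csum f = f i0;
  csum_bool : forall f : bool -> S, csum f = f true + f false;
  csum_bij : forall I J (h : I -> J) (f : J -> S), bijective h ->
     csum f = csum (fun i => f (h i));
  csum_partition : forall I J (g : I -> J) (f : I -> S),
     csum f = csum (fun j : J => csum (fun x : {i : I | g i = j} => f (proj1_sig x)));
  csum_mull : forall I (f : I -> S) c, csum (fun i => c * f i) = c * csum f;
  csum_mulr : forall I (f : I -> S) c, csum (fun i => f i * c) = csum f * c;
  vsum_empty : forall I (f : I -> V), (I -> False) -> vsum f = 0;
  vsum_single : forall I (f : I -> V) (i0 : I), (forall i, i = i0) -> vsum f = f i0;
  vsum_bool : forall f : bool -> V, vsum f = f true + f false;
  vsum_bij : forall I J (h : I -> J) (f : J -> V), bijective h ->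
     vsum f = vsum (fun i => f (h i));
  vsum_partition : forall I J (g : I -> J) (f : I -> V),
     vsum f = vsum (fun j : J => vsum (fun x : {i : I | g i = j} => f (proj1_sig x)));
  vsum_scale : forall I (f : I -> V) s, vsum (fun i => s *: f i) = s *: vsum f;
  vsum_scaler : forall I (f : I -> S) v, vsum (fun i => f i *: v) = csum f *: v;
  iprod_shift : forall s : nat -> S, iprod s = s 0%N *: iprod (fun t => s t.+1);
  iprod_sum : forall (I : nat -> Type) (f : forall t, I t -> S),
     iprod (fun t => csum (f t)) =
     vsum (fun g : (forall t, I t) => iprod (fun t => f t (g t)));
  iprod_group : forall (s : nat -> S) (nn : nat -> nat), nn 0%N = 0%N ->
     (forall t, (nn t < nn t.+1)%N) ->
     iprod s = iprod (fun t => \prod_(nn t <= i < nn t.+1) s i)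
}.

Arguments complete_pair : clear implicits.

Section PDA.
Variables (S : pzSemiRingType) (V : lSemiModType S) (C : complete_pair S V).
Variables (Gamma : finType) (n : nat).

(* A Gamma^* x Gamma^* matrix with n x n blocks over S: M pi1 pi2 i j is the
   (i,j) entry of block M_{pi1,pi2}. *)
Definition pdmat := seq Gamma -> seq Gamma -> 'I_n -> 'I_n -> S.

Definition pushdown_matrix (M : pdmat) : Prop :=
  (forall p : Gamma, exists L : seq (seq Gamma),
      forall pi, pi \notin L -> forall i j, M [:: p] pi i j = 0) /\
  (forall pi1 pi2,
     (forall p pi pi', pi1 = p :: pi' -> pi2 = pi ++ pi' ->
         forall i j, M pi1 pi2 i j = M [:: p] pi i j) /\
     (~ (exists p pi pi', pi1 = p :: pi' /\ pi2 = pi ++ pi') ->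
         forall i j, M pi1 pi2 i j = 0)).

Definition omega_pda (S' : S -> Prop) (I : 'I_n -> S) (M : pdmat)
  (P : 'I_n -> S) (p0 : Gamma) (l : nat) : Prop :=
  (0 < n)%N /\ pushdown_matrix M /\
  (forall pi1 pi2 i j, S' (M pi1 pi2 i j)) /\
  (forall i, S' (I i)) /\ (forall i, S' (P i)) /\ (l <= n)%N.

Definition mmul (A B : pdmat) : pdmat := fun pi1 pi2 i j =>
  csum C (fun pi : seq Gamma => \sum_(k < n) A pi1 pi i k * B pi pi2 k j).

Definition mone : pdmat := fun pi1 pi2 i j =>
  if (pi1 == pi2) && (i == j) then 1 else 0.

Definition mpow (A : pdmat) (m : nat) : pdmat := iter m (fun X => mmul X A) mone.

Definition mstar (A : pdmat) : pdmat := fun pi1 pi2 i j =>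
  csum C (fun m : nat => mpow A m pi1 pi2 i j).

(* P_l : state sequences visiting states 1..l infinitely often (states are
   0-indexed here, so state j+1 <= l iff j < l) *)
Definition inf_often_le (l : nat) (js : nat -> 'I_n) : Prop :=
  forall N, exists t, (N <= t)%N /\ (js t < l)%N.

Definition momega (M : pdmat) (l : nat) (pi : seq Gamma) (i : 'I_n) : V :=
  vsum C (fun pis : nat -> seq Gamma =>
    vsum C (fun js : {js : nat -> 'I_n | inf_often_le l js} =>
      iprod C (fun t =>
        M (match t with 0 => pi | t'.+1 => pis t' end) (pis t)
          (match t with 0 => i | t'.+1 => proj1_sig js t' end)
          (proj1_sig js t)))).

Definition behavior_fin (I : 'I_n -> S) (M : pdmat) (P : 'I_n -> S) (p0 : Gamma) : S :=
  \sum_(m2 < n) (\sum_(m1 < n) I m1 * mstar M [:: p0] [::] m1 m2) * P m2.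

Definition behavior_inf (I : 'I_n -> S) (M : pdmat) (p0 : Gamma) (l : nat) : V :=
  \sum_(m < n) I m *: momega M l [:: p0] m.

Definition behavior (I : 'I_n -> S) (M : pdmat) (P : 'I_n -> S) (p0 : Gamma)
  (l : nat) : S * V := (behavior_fin I M P p0, behavior_inf I M p0 l).

(* [m1,p1,m2][m2,p2,m3]...[mk,pk,j] for ps = p1..pk, ms = m1..mk *)
Fixpoint chainS (tri : 'I_n -> Gamma -> 'I_n -> S) (ps : seq Gamma)
  (ms : seq 'I_n) (j : 'I_n) : S :=
  match ps, ms with
  | p :: ps', m :: ms' => tri m p (head j ms') * chainS tri ps' ms' j
  | _, _ => 1
  end.

(* [m1,p1,m2]...[m_{j-1},p_{j-1},m_j][m_j,p_j] for ms = m1..mj *)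
Fixpoint chainV (tri : 'I_n -> Gamma -> 'I_n -> S) (br : 'I_n -> Gamma -> V)
  (ps : seq Gamma) (ms : seq 'I_n) : V :=
  match ps, ms with
  | p :: ps', m :: ms' =>
      match ms' with
      | [::] => br m p
      | m' :: _ => tri m p m' *: chainV tri br ps' ms'
      end
  | _, _ => 0
  end.

End PDA.

(* Both M^* and M^{omega,l} are sums over the configuration graph of the
   automaton: ((M^* )_{pi,pi'})_{i,j} sums the weights of the finite paths from
   (pi, i) to (pi', j), and ((M^{omega,l})_pi)_i the weights of the infinite runs
   from (pi, i) that visit the states 1..l infinitely often.  A pushdown matrix
   only reads the top of the stack, so a path from (p pi, i) to the empty stack
   splits uniquely, at its first return to the stack pi, into a path from p to
   the empty stack (run on top of pi) and a path from pi; an infinite run from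
   (p pi, i) either never returns to pi, and is then a run from p on top of pi,
   or splits in the same way.  Iterating along p1...pk turns the path sum from
   p1...pk into the products [m1,p1,m2]...[mk,pk,j] (resp. the sums of
   [m1,p1,m2]...[mj,pj]), and expanding the first step of the paths from p gives
   the equations of the system. *)

From HB Require Import structures.
From mathcomp Require Import all_boot all_order all_algebra.
From Stdlib Require Import ProofIrrelevance ClassicalEpsilon FunctionalExtensionality.
Import GRing.Theory.
Local Open Scope ring_scope.
Set Implicit Arguments. Unset Strict Implicit.

Lemma sval_inj (A : Type) (P : A -> Prop) (x y : {a | P a}) :
  sval x = sval y -> x = y.
Proof.
by case: x y => a pa [b pb] /= eab; subst b; rewrite (proof_irrelevance _ pa pb).
Qed.

Lemma ex_minn_eq (P : pred nat) (E : exists k, P k) k :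
  P k -> (forall t, (t < k)%N -> ~~ P t) -> ex_minn E = k.
Proof.
move=> Pk before; case: ex_minnP => k' Pk' min_k'.
by apply/eqP; rewrite eqn_leq min_k' // leqNgt; apply: contraL Pk' => /before.
Qed.

Lemma last_mkseq (T : Type) (x : T) (f : nat -> T) N : last x (mkseq f N.+1) = f N.
Proof. by rewrite mkseqS last_rcons. Qed.

(** * Complete sums *)

Record complete_sum (X : nmodType) (gsum : forall I : Type, (I -> X) -> X) : Prop :=
  CompleteSum {
  gsum0 : forall I : Type, gsum _ (fun _ : I => 0) = 0;
  gsum_single : forall I (f : I -> X) (i0 : I), (forall i, i = i0) -> gsum _ f = f i0;
  gsum_bool : forall f : bool -> X, gsum _ f = f true + f false;
  gsum_bij : forall I J (h : I -> J) (f : J -> X), bijective h ->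
    gsum _ f = gsum _ (fun i => f (h i));
  gsum_partition : forall I J (g : I -> J) (f : I -> X),
    gsum _ f = gsum _ (fun j : J => gsum _ (fun x : {i : I | g i = j} => f (sval x)))
}.

Section CompleteSumTheory.
Variables (X : nmodType) (gsum : forall I : Type, (I -> X) -> X).
Hypothesis gsumP : complete_sum gsum.

Lemma eq_gsum I (f g : I -> X) : f =1 g -> gsum f = gsum g.
Proof. by move=> /functional_extensionality ->. Qed.

Lemma gsum_eq0 I (f : I -> X) : (forall i, f i = 0) -> gsum f = 0.
Proof. by move=> f0; rewrite (eq_gsum f0) (gsum0 gsumP). Qed.

Lemma gsum_bij_support A B (f : A -> X) (g : B -> X) (h : A -> B) (h' : B -> A) :
  (forall a, f a != 0 -> h' (h a) = a /\ g (h a) = f a) ->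
  (forall b, g b != 0 -> h (h' b) = b /\ f (h' b) = g b) -> gsum f = gsum g.
Proof.
move=> hK h'K.
rewrite (gsum_partition gsumP (fun a => f a != 0)).
rewrite (gsum_partition gsumP (fun b => g b != 0)) !(gsum_bool gsumP).
rewrite [X in _ + X]gsum_eq0 => [|[a /= /negbFE/eqP //]].
rewrite [X in _ = _ + X]gsum_eq0 => [|[b /= /negbFE/eqP //]].
rewrite !addr0.
have hP (x : {a | (f a != 0) = true}) : (g (h (sval x)) != 0) = true.
  by case: x => a /= fa; have [_ ->] := hK a fa.
have h'P (y : {b | (g b != 0) = true}) : (f (h' (sval y)) != 0) = true.
  by case: y => b /= gb; have [_ ->] := h'K b gb.
rewrite (gsum_bij gsumP (h := fun x => exist (fun b => (g b != 0) = true) _ (hP x))).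
  by apply: eq_gsum => -[a fa] /=; have [_ ->] := hK a fa.
exists (fun y => exist (fun a => (f a != 0) = true) _ (h'P y)).
  by case=> a fa; apply: sval_inj => /=; have [-> _] := hK a fa.
by case=> b gb; apply: sval_inj => /=; have [-> _] := h'K b gb.
Qed.

Lemma gsum_unit (f : unit -> X) : gsum f = f tt.
Proof. by apply: (gsum_single gsumP) => -[]. Qed.

Lemma gsum_sumType A B (f : A + B -> X) :
  gsum f = gsum (fun a : A => f (inl a)) + gsum (fun b : B => f (inr b)).
Proof.
pose isl (x : A + B) := if x is inl _ then true else false.
rewrite (gsum_partition gsumP isl) (gsum_bool gsumP); congr (_ + _).
  rewrite (gsum_bij gsumP (h := fun a => exist (fun x => isl x = true) (inl a) erefl)) //.
  exists (fun x => match x with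
                   | exist (inl a) _ => a
                   | exist (inr _) p => False_rect _ (Bool.diff_false_true p) end) => //.
  by case=> -[a|b] p; apply: sval_inj.
rewrite (gsum_bij gsumP (h := fun b => exist (fun x => isl x = false) (inr b) erefl)) //.
exists (fun x => match x with
                 | exist (inr b) _ => b
                 | exist (inl _) p => False_rect _ (Bool.diff_true_false p) end) => //.
by case=> -[a|b] p; apply: sval_inj.
Qed.

Lemma gsum_pair A B (f : A * B -> X) :
  gsum f = gsum (fun a : A => gsum (fun b : B => f (a, b))).
Proof.
rewrite (gsum_partition gsumP fst); apply: eq_gsum => a.
rewrite (gsum_bij gsumP (h := fun b => exist (fun x : A * B => x.1 = a) (a, b) erefl)) //.
exists (fun x => (sval x).2) => // -[[a' b] /= ea].
by apply: sval_inj; rewrite /= ea.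
Qed.

Lemma gsum_ord k (f : 'I_k -> X) : gsum f = \sum_(i < k) f i.
Proof.
elim: k f => [|k IHk] f; first by rewrite big_ord0 gsum_eq0 // => -[].
rewrite big_ord_recl -IHk.
rewrite (gsum_bij gsumP (h := @unsplit 1 k)); last first.
  exact: Bijective (@unsplitK 1 k) (@splitK 1 k).
rewrite gsum_sumType (gsum_single gsumP _ (i0 := ord0)) => [|i]; last exact: ord1.
by congr (f _ + _); [apply: val_inj | apply: eq_gsum => i; congr f; apply: val_inj].
Qed.

Lemma gsum_fin (T : finType) (f : T -> X) : gsum f = \sum_(x : T) f x.
Proof.
have enumP : bijective (@enum_val T (pred_of_simpl predT)).
  by exists enum_rank; [exact: enum_valK | exact: enum_rankK].
rewrite (gsum_bij gsumP _ enumP) gsum_ord (reindex _ (onW_bij _ enumP)).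
by apply: eq_bigl => i.
Qed.

Lemma gsum_nat (f : nat -> X) : gsum f = f 0%N + gsum (fun k => f k.+1).
Proof.
pose h (x : unit + nat) := if x is inr k then k.+1 else 0%N.
rewrite (gsum_bij gsumP (h := h)) ?gsum_sumType ?gsum_unit //.
by exists (fun k => if k is k'.+1 then inr k' else inl tt) => [[[]|k]|[|k]].
Qed.

Lemma gsum_seq T (f : seq T -> X) :
  gsum f = gsum (fun k => gsum (fun t : k.-tuple T => f t)).
Proof.
rewrite (gsum_partition gsumP size); apply: eq_gsum => k.
pose h (t : k.-tuple T) := exist (fun s : seq T => size s = k) (tval t) (size_tuple t).
rewrite (gsum_bij gsumP (h := h)) //.
exists (fun x : {s : seq T | size s = k} => Tuple (introT eqP (proj2_sig x))) => [t|[s p]].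
  exact: val_inj.
exact: sval_inj.
Qed.

End CompleteSumTheory.

Section TupleSum.
Variables (R : nmodType) (T : finType).

Lemma sum_tuple0 (F : 0.-tuple T -> R) : \sum_(t : 0.-tuple T) F t = F [tuple].
Proof. by rewrite (big_pred1 [tuple]) // => t; rewrite [t]tuple0 /= eqxx. Qed.

Lemma sum_tuple_cons k (F : k.+1.-tuple T -> R) :
  \sum_(t : k.+1.-tuple T) F t = \sum_(x : T) \sum_(t : k.-tuple T) F [tuple of x :: t].
Proof.
rewrite pair_big /= (reindex (fun p : T * k.-tuple T => [tuple of p.1 :: p.2])) //.
exists (fun t => (thead t, [tuple of behead t])) => [[x t] _|t _].
  by congr (_, _); apply: val_inj.
by case/tupleP: t => x t; apply: val_inj.
Qed.

End TupleSum.

Section CompletePairTheory.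
Variables (S : pzSemiRingType) (V : lSemiModType S) (C : complete_pair S V).

Lemma csum_complete : complete_sum (@csum _ _ C).
Proof.
split; [|exact: csum_single|exact: csum_bool|exact: csum_bij|exact: csum_partition].
move=> I; rewrite -[RHS](mul0r (csum C (fun _ : I => 0))) -csum_mull.
by congr (csum C _); apply: functional_extensionality => i; rewrite mul0r.
Qed.

Lemma vsum_complete : complete_sum (@vsum _ _ C).
Proof.
split; [|exact: vsum_single|exact: vsum_bool|exact: vsum_bij|exact: vsum_partition].
move=> I; rewrite -[RHS](scale0r (vsum C (fun _ : I => 0 : V))) -vsum_scale.
by congr (vsum C _); apply: functional_extensionality => i; rewrite scale0r.
Qed.

Lemma iprod_prefix (s : nat -> S) N :
  iprod C s = (\prod_(t < N) s t) *: iprod C (fun t => s (N + t)%N).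
Proof.
elim: N => [|N IHN]; first by rewrite big_ord0 scale1r.
rewrite IHN (iprod_shift C (fun t => s (N + t)%N)) scalerA big_ord_recr /= addn0.
by congr (_ *: iprod C _); apply: functional_extensionality => t; rewrite addnS.
Qed.

Lemma iprod_eq0 (s : nat -> S) t : s t = 0 -> iprod C s = 0.
Proof. by move=> st0; rewrite (iprod_prefix s t.+1) big_ord_recr /= st0 mulr0 scale0r. Qed.

Lemma iprod_neq0 (s : nat -> S) : iprod C s != 0 -> forall t, s t != 0.
Proof. by move=> s_nz t; apply: contraNneq s_nz => /iprod_eq0 ->. Qed.

End CompletePairTheory.

(** * Configurations and finite paths *)

Section PushdownAutomaton.
Variables (S : pzSemiRingType) (V : lSemiModType S) (C : complete_pair S V).
Variables (Gamma : finType) (n : nat) (M : pdmat S Gamma n).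
Hypothesis HM : pushdown_matrix M.

Lemma pdmat_nil pi i j : M [::] pi i j = 0.
Proof. by apply: (proj2 (HM.2 [::] pi)) => -[p [pi' [pi'' []]]]. Qed.

Lemma pdmat_cat x y r i j : x != [::] -> M (x ++ r) (y ++ r) i j = M x y i j.
Proof.
case: x => [//|p x] _; have [_ Mtop] := HM.
have [/suffixP [pi ->] | xNy] := boolP (suffix x y).
  by rewrite -catA (proj1 (Mtop _ _) p pi _ erefl erefl) (proj1 (Mtop _ _) p pi _ erefl erefl).
rewrite (proj2 (Mtop _ _)) ?(proj2 (Mtop _ _)) // => -[p' [pi [pi' [[_ <-] ypi]]]].
  by move: xNy; rewrite ypi suffix_suffix.
have : suffix (x ++ r) (y ++ r) by rewrite ypi suffix_suffix.
by rewrite suffix_catl // eqxx (negbTE xNy).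
Qed.

Lemma pdmat_suffix x r d i j : x != [::] -> M (x ++ r) d i j != 0 -> suffix r d.
Proof.
case: x => [//|p x] _; have [_ Mtop] := HM.
have [/catl_suffix //|xrNd] := boolP (suffix (x ++ r) d).
rewrite (proj2 (Mtop _ _)) ?eqxx // => -[p' [pi [pi' [[_ <-] dpi]]]].
by move: xrNd; rewrite dpi suffix_suffix.
Qed.

(* A configuration is a pair (stack, state), the top of the stack first. *)
Definition config := (seq Gamma * 'I_n)%type.

Definition step (c d : config) : S := M c.1 d.1 c.2 d.2.

Definition cfg_lift (r : seq Gamma) (c : config) : config := (c.1 ++ r, c.2).
Definition cfg_unlift (r : seq Gamma) (c : config) : config :=
  (take (size c.1 - size r) c.1, c.2).
Definition on_stack (r : seq Gamma) : pred config := fun c => c.1 == r.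

Lemma cfg_liftK r : cancel (cfg_lift r) (cfg_unlift r).
Proof. by case=> x i; rewrite /cfg_unlift /= size_cat addnK take_size_cat. Qed.

Lemma cfg_unliftK r c : suffix r c.1 -> cfg_lift r (cfg_unlift r c) = c.
Proof. by case: c => _ i /= /suffixP [x ->]; rewrite (cfg_liftK r (x, i)). Qed.

Lemma lift_on_stack r c : on_stack r (cfg_lift r c) = (c.1 == [::]).
Proof.
rewrite /on_stack /=; case: c.1 => [|p x] /=; first by rewrite eqxx.
apply/eqP => /(congr1 size); rewrite /= size_cat -addSn -[X in _ = X]add0n.
by move/addIn.
Qed.

Lemma step_nil m d : step ([::], m) d = 0.
Proof. exact: pdmat_nil. Qed.

Lemma step_neq0_nonempty c d : step c d != 0 -> c.1 != [::].
Proof. by case: c => [[|p x] i] //; rewrite step_nil eqxx. Qed.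

Lemma step_lift r c d : c.1 != [::] -> step (cfg_lift r c) (cfg_lift r d) = step c d.
Proof. exact: pdmat_cat. Qed.

Fixpoint path_wt (c : config) (L : seq config) : S :=
  if L is d :: L' then step c d * path_wt d L' else 1.

Fixpoint path_nz (c : config) (L : seq config) : bool :=
  if L is d :: L' then (step c d != 0) && path_nz d L' else true.

Lemma path_wt_cat c L1 L2 : path_wt c (L1 ++ L2) = path_wt c L1 * path_wt (last c L1) L2.
Proof. by elim: L1 c => [|d L1 IHL] c /=; rewrite ?mul1r // IHL mulrA. Qed.

Lemma path_nz_cat c L1 L2 : path_nz c (L1 ++ L2) = path_nz c L1 && path_nz (last c L1) L2.
Proof. by elim: L1 c => [|d L1 IHL] c //=; rewrite IHL andbA. Qed.

Lemma path_wt_neq0 c L : path_wt c L != 0 -> path_nz c L.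
Proof.
elim: L c => [|d L IHL] c //= wt_nz; apply/andP; split.
  by apply: contraNneq wt_nz => ->; rewrite mul0r.
by apply: IHL; apply: contraNneq wt_nz => ->; rewrite mulr0.
Qed.

Lemma path_nz_nonempty c L : path_nz c L -> all (fun e => e.1 != [::]) (belast c L).
Proof.
by elim: L c => [|d L IHL] c //= /andP [/step_neq0_nonempty -> /IHL ->].
Qed.

Lemma path_wt_lift r c L : all (fun e => e.1 != [::]) (belast c L) ->
  path_wt (cfg_lift r c) (map (cfg_lift r) L) = path_wt c L.
Proof.
by elim: L c => [|d L IHL] c //= /andP [c_ne /IHL ->]; rewrite step_lift.
Qed.

Lemma unlift_nonempty r c : suffix r c.1 -> ~~ on_stack r c -> (cfg_unlift r c).1 != [::].
Proof.
case: c => _ i /= /suffixP [y ->] yrNr; rewrite size_cat addnK take_size_cat //.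
by apply: contraNneq yrNr => y0; rewrite /on_stack y0.
Qed.

Lemma step_unlift r c d : suffix r c.1 -> ~~ on_stack r c -> suffix r d.1 ->
  step (cfg_unlift r c) (cfg_unlift r d) = step c d.
Proof.
move=> rc cNr rd; rewrite -[in RHS](cfg_unliftK rc) -[in RHS](cfg_unliftK rd).
by rewrite step_lift // unlift_nonempty.
Qed.

Lemma path_unlift r c L : suffix r c.1 -> all (predC (on_stack r)) (belast c L) ->
  path_nz c L ->
  all (fun d => suffix r d.1) L /\
  path_wt (cfg_unlift r c) (map (cfg_unlift r) L) = path_wt c L.
Proof.
elim: L c => [|d L IHL] c rc /=; first by [].
move=> /andP [cNr Lr] /andP [cd_nz Lnz].
have rd : suffix r d.1.
  have [x cx] := suffixP rc.
  have x_ne : x != [::] by apply: contraNneq cNr => x0; rewrite /on_stack cx x0.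
  by move: cd_nz; rewrite /step cx; apply: pdmat_suffix.
have [-> <-] := IHL d rd Lr Lnz; rewrite rd step_unlift //.
Qed.

Lemma path_first_return r x i P e : x != [::] -> on_stack r e ->
  all (predC (on_stack r)) P -> path_nz (x ++ r, i) (rcons P e) ->
  [/\ map (cfg_lift r) (map (cfg_unlift r) (rcons P e)) = rcons P e,
      last (x, i) (map (cfg_unlift r) (rcons P e)) = ([::], e.2) &
      path_wt (x, i) (map (cfg_unlift r) (rcons P e)) = path_wt (x ++ r, i) (rcons P e)].
Proof.
move=> x_ne /eqP er Pr Pnz.
have xrNr : ~~ on_stack r (x ++ r, i) by rewrite (lift_on_stack r (x, i)).
have Pr' : all (predC (on_stack r)) (belast (x ++ r, i) (rcons P e)).
  by rewrite belast_rcons /= xrNr.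
have [Psuf <-] := @path_unlift r (x ++ r, i) _ (suffix_suffix x r) Pr' Pnz.
rewrite (cfg_liftK r (x, i)); split=> //.
  by rewrite -map_comp map_id_in // => d /(allP Psuf) /cfg_unliftK.
by rewrite map_rcons last_rcons /cfg_unlift er subnn take0.
Qed.

Lemma path_to_nil x i L m : x != [::] -> path_nz (x, i) L -> last (x, i) L = ([::], m) ->
  exists2 L', all (fun d => d.1 != [::]) L' & L = rcons L' ([::], m).
Proof.
move=> x_ne /path_nz_nonempty; case/lastP: L => [_ [x0]|L e]; first by rewrite x0 in x_ne.
by rewrite belast_rcons last_rcons => /andP [_ L'ne] <-; exists L.
Qed.

Let csumC := csum_complete C.
Let vsumC := vsum_complete C.

Definition path_sum (c c' : config) : S :=
  csum C (fun L : seq config => if last c L == c' then path_wt c L else 0).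

Definition path_sum_len m (c c' : config) : S :=
  csum C (fun L : {L : seq config | size L = m} =>
    if last c (sval L) == c' then path_wt c (sval L) else 0).

Lemma path_sum_lenS m c c' :
  path_sum_len m.+1 c c' = csum C (fun d : config => path_sum_len m c d * step d c').
Proof.
have rconsP (L : {L : seq config | size L = m}) : size (rcons (sval L) c') = m.+1.
  by rewrite size_rcons (proj2_sig L).
have takeP (L : {L : seq config | size L = m.+1}) : size (take m (sval L)) = m.
  by rewrite size_takel // (proj2_sig L).
rewrite /path_sum_len; transitivity (csum C (fun p : config * {L | size L = m} =>
  (if last c (sval p.2) == p.1 then path_wt c (sval p.2) else 0) * step p.1 c')); last first.
  by rewrite (gsum_pair csumC); apply: eq_gsum => d; rewrite -csum_mulr.
apply: (gsum_bij_support csumC (h := fun L => (last c (take m (sval L)), exist _ _ (takeP L)))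
                               (h' := fun p => exist _ _ (rconsP p.2))).
- case=> L' sizeL' /=; case: (last c L' =P c') => [L'c' _|_ /eqP //].
  have [L sizeL L'E] : exists2 L, size L = m & L' = rcons L c'.
    case/lastP: L' sizeL' L'c' => [//|L e]; rewrite size_rcons last_rcons => -[sizeL] ->.
    by exists L.
  have takeL : take m L' = L by rewrite L'E -cats1 take_size_cat.
  split; first by apply: sval_inj; rewrite /= takeL.
  by rewrite takeL eqxx L'E -cats1 path_wt_cat /= mulr1.
- case=> d [L sizeL] /=; case: (last c L =P d) => [Ld _|_]; last by rewrite mul0r eqxx.
  have takeL : take m (rcons L c') = L by rewrite -cats1 take_size_cat.
  split; first by rewrite -Ld; congr (_, _); [congr last | apply: sval_inj].
  by rewrite last_rcons eqxx -cats1 path_wt_cat /= mulr1 Ld.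
Qed.

Lemma mpow_path_sum m c c' : mpow C M m c.1 c'.1 c.2 c'.2 = path_sum_len m c c'.
Proof.
elim: m c' => [|m IHm] c'.
  pose nil0 := exist (fun L : seq config => size L = 0%N) [::] erefl.
  rewrite /path_sum_len (gsum_single csumC _ (i0 := nil0)) => [|[[|//] p]].
    by rewrite /= /mone; case: c c' => [pi i] [pi' i']; rewrite xpair_eqE.
  exact: sval_inj.
rewrite path_sum_lenS (gsum_pair csumC) /mpow iterS -/(mpow C M m) /mmul.
apply: eq_gsum => pi; rewrite (gsum_fin csumC); apply: eq_bigr => k _.
by rewrite (IHm (pi, k)).
Qed.

Lemma mstar_path_sum c c' : mstar C M c.1 c'.1 c.2 c'.2 = path_sum c c'.
Proof.
rewrite /mstar /path_sum (gsum_partition csumC size).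
by apply: eq_gsum => m; rewrite mpow_path_sum.
Qed.

Lemma path_sum_first c c' :
  path_sum c c' = (c == c')%:R + csum C (fun d => step c d * path_sum d c').
Proof.
pose g (x : unit + config * seq config) :=
  if x is inr (d, L) then (if last d L == c' then step c d * path_wt d L else 0)
  else (c == c')%:R.
rewrite /path_sum (gsum_bij_support csumC (g := g)
  (h := fun L => if L is d :: L' then inr (d, L') else inl tt)
  (h' := fun x => if x is inr (d, L) then d :: L else [::])); last 2 first.
- by case=> [|d L] //=; case: (c == c').
- by case=> [[]|[d L]] //=; case: (c == c').
rewrite (gsum_sumType csumC) (gsum_unit csumC) (gsum_pair csumC); congr (_ + _).
apply: eq_gsum => d; rewrite -csum_mull; apply: eq_gsum => L /=.
by case: ifP => /=; rewrite ?mulr0.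
Qed.

Lemma path_sum_nil m j : path_sum ([::], m) ([::], j) = (m == j)%:R.
Proof.
rewrite path_sum_first (gsum_eq0 csumC) => [|d]; last by rewrite step_nil mul0r.
by rewrite addr0 xpair_eqE eqxx.
Qed.

Definition path_cut (r : seq Gamma) (c0 : config) (L : seq config) :=
  let t := find (on_stack r) L in
  ((nth c0 L t).2, (map (cfg_unlift r) (take t.+1 L), drop t.+1 L)).

Definition path_glue (r : seq Gamma) (p : 'I_n * (seq config * seq config)) :=
  map (cfg_lift r) p.2.1 ++ p.2.2.

Lemma path_cutK x r i j L : x != [::] -> path_nz (x ++ r, i) L ->
  last (x ++ r, i) L = ([::], j) ->
  let p := path_cut r (x ++ r, i) L in
  [/\ path_glue r p = L, last (x, i) p.2.1 = ([::], p.1),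
      last (r, p.1) p.2.2 = ([::], j) &
      path_wt (x, i) p.2.1 * path_wt (r, p.1) p.2.2 = path_wt (x ++ r, i) L].
Proof.
move=> x_ne Lnz Lj /=; set c0 := (x ++ r, i).
have c0r : ~~ on_stack r c0 by rewrite (lift_on_stack r (x, i)).
(* Otherwise all of [L] stays above [r], including its last stack [[::]]. *)
have hasL : has (on_stack r) L.
  apply/negPn/negP; rewrite -all_predC => Lr.
  have c0Lr : all (predC (on_stack r)) (c0 :: L) by rewrite /= c0r.
  have belastr : all (predC (on_stack r)) (belast c0 L).
    by move: c0Lr; rewrite lastI all_rcons => /andP [].
  have [Lsuf _] := @path_unlift r c0 L (suffix_suffix x r) belastr Lnz.
  have c0Lsuf : all (fun d => suffix r d.1) (c0 :: L) by rewrite /= suffix_suffix.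
  have := allP c0Lsuf _ (mem_last c0 L).
  rewrite Lj suffixs0 => /eqP r0.
  by move: (allP c0Lr _ (mem_last c0 L)); rewrite Lj r0.
set t := find (on_stack r) L; set e := nth c0 L t.
have takeE : take t.+1 L = rcons (take t L) e by apply: take_nth; rewrite -has_find.
have er : on_stack r e := nth_find c0 hasL.
have Pr : all (predC (on_stack r)) (take t L) by rewrite all_predC has_take // ltnn.
have Pnz : path_nz c0 (rcons (take t L) e).
  by move: Lnz; rewrite -{1}(cat_take_drop t.+1 L) path_nz_cat takeE => /andP [].
have [glueE lastE wtE] := path_first_return x_ne er Pr Pnz.
rewrite -takeE in glueE lastE wtE.
have lastP : last c0 (take t.+1 L) = e by rewrite takeE last_rcons.
have eE : (r, e.2) = e by rewrite -(eqP er) -surjective_pairing.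
split=> //; first by rewrite /path_glue /= glueE cat_take_drop.
  by rewrite eE -lastP -last_cat cat_take_drop.
by rewrite wtE eE -lastP -path_wt_cat cat_take_drop.
Qed.

Lemma path_glueK x r i p : x != [::] -> path_nz (x, i) p.2.1 ->
  last (x, i) p.2.1 = ([::], p.1) ->
  [/\ path_cut r (x ++ r, i) (path_glue r p) = p,
      last (x ++ r, i) (path_glue r p) = last (r, p.1) p.2.2 &
      path_wt (x ++ r, i) (path_glue r p) = path_wt (x, i) p.2.1 * path_wt (r, p.1) p.2.2].
Proof.
case: p => m [L1 L2] /= x_ne L1nz L1m.
have [L1' L1'ne L1E] := path_to_nil x_ne L1nz L1m.
have liftL1 : map (cfg_lift r) L1 = rcons (map (cfg_lift r) L1') (r, m).
  by rewrite L1E map_rcons.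
have lastL1 : last (x ++ r, i) (map (cfg_lift r) L1) = (r, m) by rewrite liftL1 last_rcons.
have L1'r : has (on_stack r) (map (cfg_lift r) L1') = false.
  by rewrite has_map; apply/negbTE/hasPn => d /(allP L1'ne) /= dne; rewrite lift_on_stack.
have findE : find (on_stack r) (path_glue r (m, (L1, L2))) = size L1'.
  by rewrite /path_glue liftL1 -cats1 -catA find_cat L1'r size_map /= /on_stack eqxx addn0.
have sizeE : (size L1').+1 = size (map (cfg_lift r) L1) by rewrite size_map L1E size_rcons.
rewrite /path_glue /=; split.
- rewrite /path_cut -/(path_glue r (m, (L1, L2))) findE sizeE /path_glue /=.
  rewrite take_size_cat // drop_size_cat // (mapK (cfg_liftK r)) nth_cat -sizeE ltnSn.
  by rewrite liftL1 nth_rcons size_map ltnn eqxx.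
- by rewrite last_cat lastL1.
by rewrite path_wt_cat lastL1 (path_wt_lift r (path_nz_nonempty L1nz)).
Qed.

Lemma path_sum_cat x r i j : x != [::] ->
  path_sum (x ++ r, i) ([::], j) =
  \sum_(m < n) path_sum (x, i) ([::], m) * path_sum (r, m) ([::], j).
Proof.
move=> x_ne.
transitivity (csum C (fun p : 'I_n * (seq config * seq config) =>
  (if last (x, i) p.2.1 == ([::], p.1) then path_wt (x, i) p.2.1 else 0) *
  (if last (r, p.1) p.2.2 == ([::], j) then path_wt (r, p.1) p.2.2 else 0))); last first.
  rewrite (gsum_pair csumC) (gsum_fin csumC); apply: eq_bigr => m _.
  rewrite (gsum_pair csumC) -csum_mulr; apply: eq_gsum => L1 /=; exact: csum_mull.
apply: (gsum_bij_support csumC (h := path_cut r (x ++ r, i)) (h' := path_glue r)).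
- move=> L; case: (last _ L =P _) => [Lj /path_wt_neq0 Lnz|_ /eqP //].
  have [glueE lastE1 lastE2 wtE] := path_cutK x_ne Lnz Lj.
  by rewrite glueE lastE1 lastE2 !eqxx /= wtE.
case=> m [L1 L2] /=; case: (last _ L1 =P _) => [L1m|_]; last by rewrite mul0r eqxx.
case: (last _ L2 =P _) => [L2j wt_nz|_]; last by rewrite mulr0 eqxx.
have L1nz : path_nz (x, i) L1.
  by apply: path_wt_neq0; apply: contraNneq wt_nz => ->; rewrite mul0r.
by have [-> -> ->] := @path_glueK x r i (m, (L1, L2)) x_ne L1nz L1m; rewrite L2j eqxx.
Qed.

Definition star_entry (i : 'I_n) (p : Gamma) (j : 'I_n) : S := mstar C M [:: p] [::] i j.

Lemma chainS_path_sum j k (ps : k.-tuple Gamma) (F : 'I_n -> S) :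
  \sum_(ms : k.-tuple 'I_n) F (head j ms) * chainS star_entry ps ms j =
  \sum_(m < n) F m * path_sum (tval ps, m) ([::], j).
Proof.
elim: k ps F => [|k IHk] ps F.
  rewrite sum_tuple0 [ps]tuple0 /= mulr1 (bigD1 j) //= path_sum_nil eqxx mulr1.
  by rewrite big1 ?addr0 // => m /negbTE; rewrite path_sum_nil => ->; rewrite mulr0.
case/tupleP: ps => a ps; rewrite sum_tuple_cons; apply: eq_bigr => m1 _ /=.
rewrite -mulr_sumr IHk (path_sum_cat ps m1 j (isT : [:: a] != [::])); congr (_ * _).
by apply: eq_bigr => m _; rewrite /star_entry (mstar_path_sum ([:: a], m1) ([::], m)).
Qed.

Lemma star_entry_eq p i j :
  star_entry i p j =
  csum C (fun k => \sum_(ps : k.-tuple Gamma) \sum_(ms : k.-tuple 'I_n)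
                     M [:: p] ps i (head j ms) * chainS star_entry ps ms j).
Proof.
rewrite /star_entry (mstar_path_sum ([:: p], i) ([::], j)) path_sum_first add0r.
rewrite (gsum_pair csumC) (gsum_seq csumC); apply: eq_gsum => k.
rewrite (gsum_fin csumC); apply: eq_bigr => ps _.
by rewrite chainS_path_sum (gsum_fin csumC).
Qed.

(** * Infinite runs *)

Variable l : nat.

Definition accepting (rho : nat -> config) : Prop := inf_often_le l (fun t => (rho t).2).

Definition run := {rho : nat -> config | accepting rho}.

Definition run_step (c : config) (rho : nat -> config) (t : nat) : S :=
  step (if t is t'.+1 then rho t' else c) (rho t).

Definition run_sum (c : config) : V :=
  vsum C (fun x : run => iprod C (run_step c (sval x))).

Definition run_lift r (rho : nat -> config) : nat -> config := fun t => cfg_lift r (rho t).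
Definition run_unlift r (rho : nat -> config) : nat -> config := fun t => cfg_unlift r (rho t).
Definition run_drop k (rho : nat -> config) : nat -> config := fun t => rho (k + t)%N.
Definition run_cat (L : seq config) (rho : nat -> config) : nat -> config :=
  fun t => if (t < size L)%N then nth (rho 0%N) L t else rho (t - size L)%N.

Lemma accepting_offset (rho rho' : nat -> config) k :
  (forall t, (rho (k + t)%N).2 = (rho' t).2) -> accepting rho <-> accepting rho'.
Proof.
move=> rhoE; split=> acc N.
  have [t [kNt tl]] := acc (k + N)%N.
  exists (t - k)%N; rewrite -rhoE subnKC ?leq_subRL ?(leq_trans (leq_addr N k) kNt) //.
have [t [Nt tl]] := acc N.
by exists (k + t)%N; rewrite rhoE (leq_trans Nt (leq_addl k t)).
Qed.

Lemma momega_run_sum pi i : momega C M l pi i = run_sum (pi, i).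
Proof.
rewrite /momega -(gsum_pair vsumC (fun p : (nat -> seq Gamma) * {js | inf_often_le l js} =>
  iprod C (fun t => M (if t is t'.+1 then p.1 t' else pi) (p.1 t)
                      (if t is t'.+1 then sval p.2 t' else i) (sval p.2 t)))).
apply: (gsum_bij_support vsumC
  (h := fun p => exist accepting (fun t => (p.1 t, sval p.2 t)) (proj2_sig p.2))
  (h' := fun x => (fun t => (sval x t).1, exist _ (fun t => (sval x t).2) (proj2_sig x)))).
- case=> pis [js acc] _ /=; split; first by congr (_, _); apply: sval_inj.
  by congr (iprod C _); apply: functional_extensionality => -[|t].
- case=> rho acc _ /=; split.
    by apply: sval_inj; apply: functional_extensionality => t /=; case: (rho t).
  by congr (iprod C _); apply: functional_extensionality => -[|t].
Qed.

Lemma run_sum_first c : run_sum c = vsum C (fun d => step c d *: run_sum d).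
Proof.
rewrite /run_sum; transitivity (vsum C (fun p : config * run =>
   step c p.1 *: iprod C (run_step p.1 (sval p.2)))); last first.
  by rewrite (gsum_pair vsumC); apply: eq_gsum => d; rewrite -vsum_scale.
have acc_tail (x : run) : accepting (fun t => sval x t.+1).
  by case: x => rho acc; apply/(accepting_offset (k := 1) (rho := rho)).
have acc_cons (p : config * run) :
    accepting (fun t => if t is t'.+1 then sval p.2 t' else p.1).
  by case: p => d [rho acc]; apply/(accepting_offset (k := 1) (rho' := rho)).
apply: (gsum_bij_support vsumC (h := fun x => (sval x 0%N, exist _ _ (acc_tail x)))
                               (h' := fun p => exist _ _ (acc_cons p))).
- case=> rho acc _ /=; split.
    by apply: sval_inj; apply: functional_extensionality => -[|t].
  rewrite [RHS]iprod_shift; congr (_ *: iprod C _).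
  by apply: functional_extensionality => -[|t].
- case=> d [rho acc] _ /=; split; first by congr (_, _); apply: sval_inj.
  by rewrite iprod_shift.
Qed.

Lemma run_sum_nil m : run_sum ([::], m) = 0.
Proof.
by apply: (gsum_eq0 vsumC) => x; apply: (iprod_eq0 C (t := 0%N)); rewrite /run_step step_nil.
Qed.

Lemma prod_run_step c rho N : \prod_(t < N) run_step c rho t = path_wt c (mkseq rho N).
Proof.
elim: N => [|N IHN]; first by rewrite big_ord0.
rewrite big_ord_recr IHN mkseqS -cats1 path_wt_cat /= mulr1.
by case: N {IHN} => [|N]; rewrite ?last_mkseq.
Qed.

Lemma iprod_run_step c rho N :
  iprod C (run_step c rho) =
  path_wt c (mkseq rho N.+1) *: iprod C (run_step (rho N) (run_drop N.+1 rho)).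
Proof.
rewrite (iprod_prefix C _ N.+1) prod_run_step; congr (_ *: iprod C _).
by apply: functional_extensionality => -[|t]; rewrite /run_step /run_drop ?addn0 ?addnS.
Qed.

Lemma path_nz_mkseq c rho N : (forall t, run_step c rho t != 0) -> path_nz c (mkseq rho N).
Proof.
move=> rho_nz; elim: N => [|N IHN] //; rewrite mkseqS -cats1 path_nz_cat IHN /= andbT.
by have := rho_nz N; case: N {IHN} => [|N]; rewrite ?last_mkseq.
Qed.

Lemma accepting_lift r rho : accepting rho -> accepting (run_lift r rho).
Proof. by []. Qed.

Lemma accepting_unlift r rho : accepting rho -> accepting (run_unlift r rho).
Proof. by []. Qed.

Lemma accepting_drop k rho : accepting rho -> accepting (run_drop k rho).
Proof. exact: (accepting_offset (k := k) (rho' := run_drop k rho) (fun t => erefl)).1. Qed.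

Lemma run_cat_drop L rho : run_drop (size L) (run_cat L rho) = rho.
Proof.
by apply: functional_extensionality => t; rewrite /run_drop /run_cat ltnNge leq_addr addKn.
Qed.

Lemma accepting_cat L rho : accepting rho -> accepting (run_cat L rho).
Proof.
apply: (accepting_offset (k := size L) (rho' := rho) _).2 => t.
by rewrite /run_cat ltnNge leq_addr addKn.
Qed.

Lemma mkseq_run_cat L rho : mkseq (run_cat L rho) (size L) = L.
Proof.
apply: (@eq_from_nth _ (rho 0%N)); rewrite ?size_mkseq // => t tL.
by rewrite nth_mkseq // /run_cat tL.
Qed.

Lemma run_cat_mkseq rho N : run_cat (mkseq rho N) (run_drop N rho) = rho.
Proof.
apply: functional_extensionality => t; rewrite /run_cat size_mkseq.
by case: ltnP => [tN|Nt]; rewrite ?nth_mkseq // /run_drop subnKC.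
Qed.

Lemma run_never_returns x r i rho : x != [::] ->
  (forall t, run_step (x ++ r, i) rho t != 0) -> (forall t, ~~ on_stack r (rho t)) ->
  run_lift r (run_unlift r rho) = rho /\
  run_step (x, i) (run_unlift r rho) = run_step (x ++ r, i) rho.
Proof.
move=> x_ne rho_nz rhoNr.
have x_r : ~~ on_stack r (x ++ r, i) by rewrite (lift_on_stack r (x, i)).
have rho_suf t : suffix r (rho t).1.
  have Pr : all (predC (on_stack r)) (belast (x ++ r, i) (mkseq rho t.+1)).
    by rewrite mkseqS belast_rcons /= x_r; apply/allP => _ /mapP [u _ ->]; apply: rhoNr.
  have [/allP -> //] :=
    @path_unlift r (x ++ r, i) _ (suffix_suffix x r) Pr (path_nz_mkseq t.+1 rho_nz).
  by rewrite mkseqS mem_rcons mem_head.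
split; apply: functional_extensionality => t; first exact: cfg_unliftK.
case: t => [|t]; rewrite /run_step /run_unlift ?step_unlift //.
by rewrite -(@step_unlift r (x ++ r, i)) ?suffix_suffix // (cfg_liftK r (x, i)).
Qed.

Lemma run_first_return x r i rho tau : x != [::] ->
  (forall t, run_step (x ++ r, i) rho t != 0) -> on_stack r (rho tau) ->
  (forall t, (t < tau)%N -> ~~ on_stack r (rho t)) ->
  let P := map (cfg_unlift r) (mkseq rho tau.+1) in
  [/\ run_cat (map (cfg_lift r) P) (run_drop tau.+1 rho) = rho,
      last (x, i) P = ([::], (rho tau).2) &
      path_wt (x, i) P *: iprod C (run_step (r, (rho tau).2) (run_drop tau.+1 rho)) =
      iprod C (run_step (x ++ r, i) rho)].
Proof.
move=> x_ne rho_nz rho_tau before P.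
have Pr : all (predC (on_stack r)) (mkseq rho tau).
  by apply/allP => d /mapP [t]; rewrite mem_iota => /andP [_ t_lt] ->; apply: before.
have Pnz : path_nz (x ++ r, i) (rcons (mkseq rho tau) (rho tau)).
  by rewrite -mkseqS; apply: path_nz_mkseq.
have [glueE lastE wtE] := path_first_return x_ne rho_tau Pr Pnz.
rewrite -mkseqS in glueE lastE wtE.
rewrite {}/P glueE run_cat_mkseq lastE wtE; split=> //.
have -> : (r, (rho tau).2) = rho tau by rewrite -(eqP rho_tau) -surjective_pairing.
by rewrite [RHS](iprod_run_step _ _ tau).
Qed.

Lemma run_lift_never_returns x r i rho : x != [::] ->
  (forall t, run_step (x, i) rho t != 0) ->
  [/\ forall t, ~~ on_stack r (run_lift r rho t), run_unlift r (run_lift r rho) = rho &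
      run_step (x ++ r, i) (run_lift r rho) = run_step (x, i) rho].
Proof.
move=> x_ne rho_nz.
have rho_ne t : (rho t).1 != [::] by apply: (step_neq0_nonempty (rho_nz t.+1)).
split=> [t||]; first by rewrite lift_on_stack.
  by apply: functional_extensionality => t; apply: cfg_liftK.
apply: functional_extensionality => -[|t]; rewrite /run_step /run_lift.
  exact: (step_lift r (c := (x, i))).
exact: step_lift.
Qed.

Lemma run_cat_first_return x r i m L rho : x != [::] -> path_nz (x, i) L ->
  last (x, i) L = ([::], m) ->
  let rho' := run_cat (map (cfg_lift r) L) rho in
  [/\ rho' (size L).-1 = (r, m), forall t, (t < (size L).-1)%N -> ~~ on_stack r (rho' t),
      mkseq rho' (size L).-1.+1 = map (cfg_lift r) L & run_drop (size L).-1.+1 rho' = rho].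
Proof.
move=> x_ne Lnz Lm rho'; have [L' L'ne LE] := path_to_nil x_ne Lnz Lm.
have sizeE : (size L).-1.+1 = size (map (cfg_lift r) L) by rewrite size_map LE size_rcons.
have predE : (size L).-1 = size L' by rewrite LE size_rcons.
have rho'E t : (t <= size L')%N ->
    rho' t = nth (r, m) (map (cfg_lift r) L') t.
  move=> tL; rewrite /rho' /run_cat LE map_rcons size_rcons size_map ltnS tL.
  rewrite nth_rcons size_map; case: ltnP => [tL'|L't].
    by apply: set_nth_default; rewrite size_map.
  by rewrite eqn_leq tL L't nth_default ?size_map.
split.
- by rewrite predE rho'E // nth_default // size_map.
- move=> t; rewrite predE => t_lt; rewrite rho'E ?(ltnW t_lt) // (nth_map ([::], m)) //.
  by rewrite lift_on_stack (allP L'ne) // mem_nth.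
- by rewrite sizeE mkseq_run_cat.
by rewrite sizeE run_cat_drop.
Qed.

Definition run_cut (r : seq Gamma) (x : run) : run + 'I_n * (seq config * run) :=
  match excluded_middle_informative (exists t, on_stack r (sval x t)) with
  | left returns => let tau := ex_minn returns in
      inr ((sval x tau).2, (map (cfg_unlift r) (mkseq (sval x) tau.+1),
           exist _ _ (accepting_drop tau.+1 (proj2_sig x))))
  | right _ => inl (exist _ _ (accepting_unlift r (proj2_sig x)))
  end.

Definition run_glue (r : seq Gamma) (y : run + 'I_n * (seq config * run)) : run :=
  match y with
  | inl z => exist _ _ (accepting_lift r (proj2_sig z))
  | inr (_, (L, z)) => exist _ _ (accepting_cat (map (cfg_lift r) L) (proj2_sig z))
  end.

Definition cut_wt x r i (y : run + 'I_n * (seq config * run)) : V :=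
  match y with
  | inl z => iprod C (run_step (x, i) (sval z))
  | inr (m, (L, z)) => (if last (x, i) L == ([::], m) then path_wt (x, i) L else 0) *:
                       iprod C (run_step (r, m) (sval z))
  end.

Lemma run_cutK x r i (z : run) : x != [::] ->
  iprod C (run_step (x ++ r, i) (sval z)) != 0 ->
  run_glue r (run_cut r z) = z /\
  cut_wt x r i (run_cut r z) = iprod C (run_step (x ++ r, i) (sval z)).
Proof.
case: z => rho acc x_ne /iprod_neq0 /= rho_nz; rewrite /run_cut /=.
case: excluded_middle_informative => [returns|never].
  case: ex_minnP => tau rho_tau tau_min.
  have before t : (t < tau)%N -> ~~ on_stack r (rho t).
    by move=> t_lt; apply: contraTN t_lt => /tau_min; rewrite -leqNgt.
  have [catE lastE wtE] := run_first_return x_ne rho_nz rho_tau before.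
  by split; [apply: sval_inj | rewrite /cut_wt lastE eqxx].
have rhoNr t : ~~ on_stack r (rho t) by apply/negP => rt; apply: never; exists t.
have [liftE stepE] := run_never_returns x_ne rho_nz rhoNr.
by split; [apply: sval_inj | rewrite /cut_wt /= stepE].
Qed.

Lemma run_glueK x r i y : x != [::] -> cut_wt x r i y != 0 ->
  run_cut r (run_glue r y) = y /\
  iprod C (run_step (x ++ r, i) (sval (run_glue r y))) = cut_wt x r i y.
Proof.
case: y => [[rho acc]|[m [L [rho acc]]]] x_ne /=.
  move=> /iprod_neq0 rho_nz.
  have [liftNr unliftE stepE] := run_lift_never_returns r x_ne rho_nz.
  rewrite /run_cut /= stepE; case: excluded_middle_informative => [returns|_].
    by exfalso; case: returns => t; rewrite (negbTE (liftNr t)).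
  by split=> //; congr inl; apply: sval_inj.
case: (last (x, i) L =P ([::], m)) => [Lm wt_nz|_]; last by rewrite scale0r eqxx.
have Lnz : path_nz (x, i) L.
  by apply: path_wt_neq0; apply: contraNneq wt_nz => ->; rewrite scale0r.
have [rho_tau before mkseqE dropE] := run_cat_first_return r rho x_ne Lnz Lm.
rewrite /run_cut /=; case: excluded_middle_informative => [returns|]; last first.
  by case; exists (size L).-1; rewrite rho_tau /on_stack eqxx.
rewrite (ex_minn_eq returns _ before); last by rewrite rho_tau /on_stack eqxx.
split; first congr (inr (_, (_, _))).
- by rewrite /= rho_tau.
- exact: etrans (congr1 (map (cfg_unlift r)) mkseqE) (mapK (cfg_liftK r) L).
- exact: sval_inj.
rewrite (iprod_run_step _ _ (size L).-1) mkseqE rho_tau dropE.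
by rewrite (path_wt_lift r (path_nz_nonempty Lnz)).
Qed.

Lemma run_sum_cat x r i : x != [::] ->
  run_sum (x ++ r, i) =
  run_sum (x, i) + \sum_(m < n) path_sum (x, i) ([::], m) *: run_sum (r, m).
Proof.
move=> x_ne; transitivity (vsum C (cut_wt x r i)).
  apply: (gsum_bij_support vsumC (h := run_cut r) (h' := run_glue r)) => [z|y] nz.
    exact: run_cutK.
  exact: run_glueK.
rewrite (gsum_sumType vsumC) (gsum_pair vsumC) (gsum_fin vsumC); congr (_ + _).
apply: eq_bigr => m _; rewrite (gsum_pair vsumC) /path_sum -vsum_scaler.
by apply: eq_gsum => L; rewrite -vsum_scale.
Qed.

Definition omega_entry (i : 'I_n) (p : Gamma) : V := momega C M l [:: p] i.

Lemma run_sum_cons a ps m :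
  run_sum (a :: ps, m) =
  omega_entry m a + \sum_(m' < n) star_entry m a m' *: run_sum (ps, m').
Proof.
rewrite (run_sum_cat ps m (isT : [:: a] != [::])) /omega_entry momega_run_sum.
congr (_ + _); apply: eq_bigr => m' _.
by rewrite /star_entry (mstar_path_sum ([:: a], m) ([::], m')).
Qed.

Lemma chainV_cons a ps m k (ms : k.+1.-tuple 'I_n) :
  chainV star_entry omega_entry (a :: ps) (m :: ms) =
  star_entry m a (thead ms) *: chainV star_entry omega_entry ps ms.
Proof. by case/tupleP: ms. Qed.

Lemma chainV_run_sum ps (F : 'I_n -> S) :
  \sum_(0 <= jj < size ps) \sum_(ms : jj.+1.-tuple 'I_n)
     F (thead ms) *: chainV star_entry omega_entry ps ms =
  \sum_(m < n) F m *: run_sum (ps, m).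
Proof.
elim: ps F => [|a ps IHps] F.
  by rewrite big_geq // big1 // => m _; rewrite run_sum_nil scaler0.
have cons_term jj :
    \sum_(ms : jj.+2.-tuple 'I_n) F (thead ms) *: chainV star_entry omega_entry (a :: ps) ms =
    \sum_(m < n) F m *: \sum_(ms : jj.+1.-tuple 'I_n)
                           star_entry m a (thead ms) *: chainV star_entry omega_entry ps ms.
  rewrite sum_tuple_cons; apply: eq_bigr => m _; rewrite scaler_sumr.
  by apply: eq_bigr => ms _; rewrite theadE chainV_cons scalerA.
change (size (a :: ps)) with (size ps).+1.
rewrite big_nat_recl // (eq_bigr _ (fun jj _ => cons_term jj)) [X in _ + X]exchange_big.
rewrite sum_tuple_cons -big_split; apply: eq_bigr => m _.
by rewrite sum_tuple0 theadE /= -scaler_sumr IHps -scalerDr run_sum_cons.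
Qed.

Lemma omega_entry_eq p i :
  omega_entry i p =
  vsum C (fun k => \sum_(ps : k.+1.-tuple Gamma) \sum_(jj < k.+1)
    \sum_(ms : jj.+1.-tuple 'I_n)
      M [:: p] ps i (thead ms) *: chainV star_entry omega_entry ps ms).
Proof.
rewrite /omega_entry momega_run_sum run_sum_first (gsum_pair vsumC) (gsum_seq vsumC).
rewrite (gsum_nat vsumC) (gsum_fin vsumC) sum_tuple0 (gsum_eq0 vsumC) ?add0r => [|m].
  2: by rewrite run_sum_nil scaler0.
apply: eq_gsum => k; rewrite (gsum_fin vsumC); apply: eq_bigr => ps _.
by rewrite (gsum_fin vsumC) -chainV_run_sum size_tuple big_mkord.
Qed.

End PushdownAutomaton.

Theorem theorem13 (S : pzSemiRingType) (V : lSemiModType S)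
  (C : complete_pair S V) (S' : S -> Prop) (n : nat) (Gamma : finType)
  (I : 'I_n -> S) (M : pdmat S Gamma n) (P : 'I_n -> S) (p0 : Gamma) (l : nat) :
  S' 0 -> S' 1 -> omega_pda S' I M P p0 l ->
  let tri := fun (i : 'I_n) (p : Gamma) (j : 'I_n) => mstar C M [:: p] [::] i j in
  let br := fun (i : 'I_n) (p : Gamma) => momega C M l [:: p] i in
  let x0 := behavior_fin C I M P p0 in
  let z0 := behavior_inf C I M p0 l in
  [/\ x0 = \sum_(m1 < n) \sum_(m2 < n) I m1 * tri m1 p0 m2 * P m2,
      forall (p : Gamma) (i j : 'I_n),
        tri i p j =
        csum C (fun k : nat =>
          \sum_(ps : k.-tuple Gamma) \sum_(ms : k.-tuple 'I_n)
             M [:: p] ps i (head j ms) * chainS tri ps ms j),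
      z0 = \sum_(m < n) I m *: br m p0,
      forall (p : Gamma) (i : 'I_n),
        br i p =
        vsum C (fun k : nat =>
          \sum_(ps : k.+1.-tuple Gamma) \sum_(jj < k.+1)
            \sum_(ms : jj.+1.-tuple 'I_n)
               M [:: p] ps i (thead ms) *: chainV tri br ps ms)
    & behavior C I M P p0 l = (behavior_fin C I M P p0, behavior_inf C I M p0 l)].
Proof.
move=> _ _ [_ [HM _]] tri br x0 z0; split=> //.
- by rewrite /x0 /behavior_fin exchange_big; apply: eq_bigr => m2 _; rewrite mulr_suml.
- by move=> p i j; apply: star_entry_eq.
- by move=> p i; apply: omega_entry_eq.
Qed.
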